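(* Let $N\geq 2$ be an integer and $p>2$, and let $$r(N,p) = \frac{2N}{2N+(p-2)(2N-1)}.$$ For $r>0$ consider the inequality in the single variable $B\in[N^{1-p},1]$: $$1 \leq \left( 1 + (N-1)\left(\frac{N \left( \tfrac12\binom{N}{2}^{-1} \left( 1 - B^{1/(p-1)}\right) \right)^{p/2}}{B}\right)^{r}\right)^{p-1} B. \qquad ( * )$$ Then $( * )$ holds for every $B\in[N^{1-p},1]$ when $r=r(N,p)$, while for every $r>r(N,p)$ there exists $B\in[N^{1-p},1]$ for which $( * )$ fails. *)

From Stdlib Require Import Reals.
Open Scope R_scope.

(* Real power x^a for x >= 0 with the convention 0^a = 0 (relevant for a > 0);
   Stdlib's Rpower x a = exp (a * ln x) would give 1 at x = 0. *)
Definition rpow (x a : R) : R := if Req_EM_T x 0 then 0 else Rpower x a.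

Definition rNp (N : nat) (p : R) : R :=
  2 * INR N / (2 * INR N + (p - 2) * (2 * INR N - 1)).

Definition rhs (N : nat) (p r B : R) : R :=
  rpow (1 + (INR N - 1) *
         rpow (INR N * rpow (/ 2 * / Binomial.C N 2
                              * (1 - rpow B (/ (p - 1)))) (p / 2) / B) r)
       (p - 1) * B.

Definition ineq_holds (N : nat) (p r B : R) : Prop := 1 <= rhs N p r B.

Definition in_range (N : nat) (p B : R) : Prop := rpow (INR N) (1 - p) <= B <= 1.

(* Substituting B = (1 + (N-1) u)^(1-p) maps u in [0,1] onto the range of B,
   and since binom(N,2) = N(N-1)/2, taking logarithms turns the inequality for u > 0 into
     (1 - r p/2) ln u <= r (p/2 - 1) ln (k u + 1 - k),   k = (N-1)/N.
   Both sides vanish at u = 1.  For r = r(N,p) the two coefficients are c k and c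
   with c = (p-2) N / (2N + (p-2)(2N-1)) >= 0, and the inequality is the concavity
   of ln.  For r > r(N,p) the slope 1 - r p/2 of the left side at u = 1 is smaller
   than the slope r (p/2 - 1) k of the right side, so it fails just below u = 1. *)

From Stdlib Require Import Reals Lra Lia Psatz.
Open Scope R_scope.

Lemma ln_le_iff x y : 0 < x -> 0 < y -> (ln x <= ln y <-> x <= y).
Proof.
  intros hx hy; split; intro H.
  - destruct (Rle_or_lt x y) as [|hlt]; [assumption|].
    apply ln_increasing in hlt; lra.
  - destruct H as [hlt| ->]; [left; apply ln_increasing|]; lra.
Qed.

Lemma ln_div x y : 0 < x -> 0 < y -> ln (x / y) = ln x - ln y.
Proof. intros hx hy. unfold Rdiv. rewrite ln_mult, ln_Rinv; auto using Rinv_0_lt_compat; ring. Qed.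

Lemma ln_le_sub_1 x : 0 < x -> ln x <= x - 1.
Proof. intro hx. pose proof (exp_ineq1_le (ln x)). rewrite exp_ln in H; lra. Qed.

Lemma ln_lt_0 x : 0 < x < 1 -> ln x < 0.
Proof. intros [hx0 hx1]. rewrite <- ln_1. now apply ln_increasing. Qed.

Lemma ln_concave k x y : 0 <= k <= 1 -> 0 < x -> 0 < y ->
  k * ln x + (1 - k) * ln y <= ln (k * x + (1 - k) * y).
Proof.
  intros hk hx hy. set (m := k * x + (1 - k) * y).
  assert (hm : 0 < m) by (unfold m; nra).
  assert (hxm : ln (x / m) <= x / m - 1) by (apply ln_le_sub_1, Rdiv_lt_0_compat; auto).
  assert (hym : ln (y / m) <= y / m - 1) by (apply ln_le_sub_1, Rdiv_lt_0_compat; auto).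
  unfold Rdiv in hxm, hym.
  rewrite ln_mult, ln_Rinv in hxm, hym by (auto; apply Rinv_0_lt_compat; auto).
  assert (hsum : k * (x * / m - 1) + (1 - k) * (y * / m - 1) = 0) by (unfold m in *; field; lra).
  nra.
Qed.

(* Both sides vanish at [u = 1] with slopes [a k] and [b]; any [u < 1] with
   [max b 0 < a k u] works, by [ln v <= v - 1] on each side. *)
Lemma exists_lt_below_1_of_slope_lt a b k : 0 < a -> 0 < k <= 1 -> b < a * k ->
  exists u, 0 < u < 1 /\ a * ln (k * u + (1 - k)) < b * ln u.
Proof.
  intros ha hk hb. set (m := Rmax b 0).
  assert (hak : 0 < a * k) by nra.
  assert (hm : 0 <= m < a * k) by (unfold m; split; [apply Rmax_r | apply Rmax_lub_lt; lra]).
  set (u := (a * k + m) / (2 * (a * k))).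
  assert (hmu : m < a * k * u) by (unfold u; field_simplify; lra).
  assert (hu : 0 < u < 1).
  { unfold u; split; [apply Rdiv_lt_0_compat | apply Rmult_lt_reg_r with (2 * (a * k)); field_simplify]; lra. }
  exists u. split; [exact hu|].
  assert (hv : ln (k * u + (1 - k)) <= - k * (1 - u)) by (pose proof (ln_le_sub_1 (k * u + (1 - k))); nra).
  assert (hinv : ln (/ u) <= / u - 1) by (apply ln_le_sub_1, Rinv_0_lt_compat; lra).
  rewrite ln_Rinv in hinv by lra.
  assert (hlnu := ln_lt_0 u hu).
  assert (hbm : b * ln u >= m * ln u) by (assert (b <= m) by apply Rmax_l; nra).
  assert (hmul : m * (1 - / u) * u = m * (u - 1)) by (field; lra).
  assert (hleft : m * (1 - / u) > - a * k * (1 - u)) by nra.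
  nra.
Qed.

Lemma Rpower_pos x a : 0 < Rpower x a.
Proof. apply exp_pos. Qed.

Lemma Rpower_1_l a : Rpower 1 a = 1.
Proof. unfold Rpower. now rewrite ln_1, Rmult_0_r, exp_0. Qed.

Lemma Rpower_le_antitone_l a x y : a < 0 -> 0 < x -> 0 < y ->
  (Rpower x a <= Rpower y a <-> y <= x).
Proof.
  intros ha hx hy.
  rewrite <- ln_le_iff, !ln_Rpower, <- (ln_le_iff y x) by (assumption || apply Rpower_pos).
  split; intro; nra.
Qed.

Lemma Rpower_Rpower_inv x a : 0 < x -> a <> 0 -> Rpower (Rpower x (/ a)) a = x.
Proof. intros hx ha. rewrite Rpower_mult, Rinv_l by exact ha. now apply Rpower_1. Qed.

Lemma one_le_Rpower_mul_iff x s a : 0 < a -> 0 < x -> 0 < s ->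
  (1 <= Rpower x a * Rpower s (- a) <-> s <= x).
Proof.
  intros ha hx hs.
  assert (hprod : 0 < Rpower x a * Rpower s (- a)) by (apply Rmult_lt_0_compat; apply Rpower_pos).
  rewrite <- ln_le_iff, ln_1, ln_mult, !ln_Rpower by (try lra; apply Rpower_pos).
  rewrite <- (ln_le_iff s x) by assumption.
  split; intro; nra.
Qed.

Lemma rpow_pos x a : 0 < x -> rpow x a = Rpower x a.
Proof. intro hx. unfold rpow. destruct (Req_EM_T x 0); [lra | reflexivity]. Qed.

Lemma rpow_0_l a : rpow 0 a = 0.
Proof. unfold rpow. destruct (Req_EM_T 0 0); [reflexivity | lra]. Qed.

(* The hypothesis matters: truncated subtraction gives [C 1 2 = 1/2]. *)
Lemma C_2 N : (2 <= N)%nat -> Binomial.C N 2 = INR N * (INR N - 1) / 2.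
Proof.
  intro hN. destruct N as [|[|M]]; try lia.
  unfold Binomial.C. replace (S (S M) - 2)%nat with M by lia.
  change (Factorial.fact (S (S M))) with (S (S M) * (S M * Factorial.fact M))%nat.
  rewrite !mult_INR, !S_INR. simpl (INR (Factorial.fact 2)).
  field. apply INR_fact_neq_0.
Qed.

Lemma pred_div_bounds n : 1 < n -> 0 < (n - 1) / n < 1.
Proof.
  intro hn. split; [apply Rdiv_lt_0_compat; lra|].
  apply Rmult_lt_reg_r with n; [lra|]. field_simplify; lra.
Qed.

Definition ineq_log_form (N : nat) (p r u : R) : Prop :=
  (1 - r * p / 2) * ln u <= r * (p / 2 - 1) * ln ((1 + (INR N - 1) * u) / INR N).

Lemma ineq_holds_iff_log_form N p r u : (2 <= N)%nat -> 1 < p -> 0 < u ->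
  ineq_holds N p r (Rpower (1 + (INR N - 1) * u) (1 - p)) <-> ineq_log_form N p r u.
Proof.
  intros hN hp hu.
  assert (hn : 2 <= INR N) by (apply (le_INR 2); exact hN).
  unfold ineq_holds, rhs, ineq_log_form.
  set (n := INR N) in *. set (s := 1 + (n - 1) * u).
  assert (hs : 1 < s) by (unfold s; nra).
  assert (Et : rpow (Rpower s (1 - p)) (/ (p - 1)) = / s).
  { rewrite rpow_pos, Rpower_mult by apply Rpower_pos.
    replace ((1 - p) * / (p - 1)) with (Ropp 1) by (field; lra).
    rewrite Rpower_Ropp, Rpower_1; lra. }
  rewrite Et, C_2 by exact hN. fold n.
  replace (/ 2 * / (n * (n - 1) / 2) * (1 - / s)) with (u / (n * s)) by (unfold s in *; field; repeat split; nra).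
  rewrite (rpow_pos (u / (n * s))) by (apply Rdiv_lt_0_compat; nra).
  set (y := n * Rpower (u / (n * s)) (p / 2) / Rpower s (1 - p)).
  assert (hy : 0 < y).
  { apply Rdiv_lt_0_compat; [apply Rmult_lt_0_compat; [lra | apply Rpower_pos] | apply Rpower_pos]. }
  assert (lny : ln y = p / 2 * ln u + (p / 2 - 1) * ln (s / n)).
  { unfold y.
    rewrite ln_div, ln_mult, !ln_Rpower, ln_div, ln_mult, ln_div
      by (apply Rpower_pos || apply Rmult_lt_0_compat || idtac; solve [apply Rpower_pos | lra]).
    field. }
  rewrite (rpow_pos y) by exact hy.
  assert (hY : 0 < Rpower y r) by apply Rpower_pos.
  rewrite rpow_pos by nra.
  replace (1 - p) with (- (p - 1)) by ring.
  rewrite one_le_Rpower_mul_iff by lra || nra.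
  assert (hsY : s <= 1 + (n - 1) * Rpower y r <-> u <= Rpower y r).
  { unfold s; split; intro; [apply Rmult_le_reg_l with (n - 1) | ]; nra. }
  rewrite hsY, <- ln_le_iff, ln_Rpower, lny by assumption.
  split; intro; lra.
Qed.

Lemma ineq_holds_at_1 N p r : ineq_holds N p r 1.
Proof.
  unfold ineq_holds, rhs.
  rewrite (rpow_pos 1), Rpower_1_l, Rminus_diag, Rmult_0_r, rpow_0_l by lra.
  rewrite Rmult_0_r, Rdiv_0_l, rpow_0_l, Rmult_0_r, Rplus_0_r, rpow_pos, Rpower_1_l by lra.
  lra.
Qed.

Lemma in_range_Rpower N p u : (1 <= N)%nat -> 1 < p -> 0 <= u <= 1 ->
  in_range N p (Rpower (1 + (INR N - 1) * u) (1 - p)).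
Proof.
  intros hN hp hu.
  assert (hn : 1 <= INR N) by (apply (le_INR 1); exact hN).
  unfold in_range. rewrite rpow_pos by lra.
  split.
  - apply Rpower_le_antitone_l; nra.
  - apply Rle_trans with (Rpower 1 (1 - p)); [apply Rpower_le_antitone_l; nra | right; apply Rpower_1_l].
Qed.

Lemma in_range_inv N p B : (2 <= N)%nat -> 1 < p -> in_range N p B ->
  exists u, 0 <= u <= 1 /\ B = Rpower (1 + (INR N - 1) * u) (1 - p).
Proof.
  intros hN hp [hlo hhi].
  assert (hn : 2 <= INR N) by (apply (le_INR 2); exact hN).
  rewrite rpow_pos in hlo by lra.
  assert (hB : 0 < B) by (pose proof (Rpower_pos (INR N) (1 - p)); lra).
  set (s := Rpower B (/ (1 - p))).
  assert (hs0 : 0 < s) by apply Rpower_pos.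
  assert (hBs : B = Rpower s (1 - p)) by (symmetry; apply Rpower_Rpower_inv; lra).
  rewrite hBs in hlo, hhi.
  assert (hs1 : 1 <= s) by (apply (Rpower_le_antitone_l (1 - p)); try lra; rewrite Rpower_1_l; exact hhi).
  assert (hsn : s <= INR N) by (apply (Rpower_le_antitone_l (1 - p)); lra).
  exists ((s - 1) / (INR N - 1)). split.
  - split; [apply Rmult_le_pos; [lra | left; apply Rinv_0_lt_compat; lra]|].
    apply Rmult_le_reg_r with (INR N - 1); [lra|].
    unfold Rdiv. rewrite Rmult_assoc, Rinv_l; lra.
  - rewrite hBs. f_equal. field. lra.
Qed.

Lemma ineq_log_form_rNp N p u : (2 <= N)%nat -> 2 <= p -> 0 < u -> ineq_log_form N p (rNp N p) u.
Proof.
  intros hN hp hu.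
  assert (hn : 2 <= INR N) by (apply (le_INR 2); exact hN).
  unfold ineq_log_form, rNp. set (n := INR N) in *.
  set (D := 2 * n + (p - 2) * (2 * n - 1)).
  assert (hD : 0 < D) by (unfold D; nra).
  set (c := (p - 2) * n / D). set (k := (n - 1) / n).
  assert (hc : 0 <= c) by (apply Rmult_le_pos; [nra | left; apply Rinv_0_lt_compat; lra]).
  assert (hk : 0 <= k <= 1) by (pose proof (pred_div_bounds n); unfold k; lra).
  replace (1 - 2 * n / D * p / 2) with (c * k) by (unfold c, k, D in *; field; split; lra).
  replace (2 * n / D * (p / 2 - 1)) with c by (unfold c; field; lra).
  replace ((1 + (n - 1) * u) / n) with (k * u + (1 - k) * 1) by (unfold k; field; lra).
  pose proof (ln_concave k u 1 hk hu Rlt_0_1) as hconc.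
  rewrite ln_1, Rmult_0_r, Rplus_0_r in hconc.
  rewrite Rmult_assoc. now apply Rmult_le_compat_l.
Qed.

Lemma ineq_log_form_fails N p r : (2 <= N)%nat -> 2 < p -> rNp N p < r ->
  exists u, 0 < u < 1 /\ ~ ineq_log_form N p r u.
Proof.
  intros hN hp hr.
  assert (hn : 2 <= INR N) by (apply (le_INR 2); exact hN).
  unfold ineq_log_form, rNp in *. set (n := INR N) in *.
  set (D := 2 * n + (p - 2) * (2 * n - 1)) in *.
  assert (hD : 0 < D) by (unfold D; nra).
  assert (hrD : 2 * n < r * D).
  { apply Rmult_lt_compat_r with (r := D) in hr; [|exact hD].
    unfold Rdiv in hr. rewrite Rmult_assoc, Rinv_l in hr; lra. }
  set (k := (n - 1) / n).
  assert (hk : 0 < k <= 1) by (pose proof (pred_div_bounds n); unfold k; lra).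
  assert (hr0 : 0 < r) by (unfold D in *; nra).
  assert (hslope : 1 - r * p / 2 < r * (p / 2 - 1) * k).
  { apply Rmult_lt_reg_r with n; [lra|].
    replace (r * (p / 2 - 1) * k * n) with (r * (p / 2 - 1) * (n - 1)) by (unfold k; field; lra).
    unfold D in hrD. nra. }
  destruct (exists_lt_below_1_of_slope_lt (r * (p / 2 - 1)) (1 - r * p / 2) k)
    as (u & hu & hlt); [nra | exact hk | exact hslope |].
  exists u. split; [exact hu|].
  replace ((1 + (n - 1) * u) / n) with (k * u + (1 - k)) by (unfold k; field; lra).
  lra.
Qed.

Theorem mainTheorem4 (N : nat) (p : R) (hN : (2 <= N)%nat) (hp : 2 < p) :
  (forall B : R, in_range N p B -> ineq_holds N p (rNp N p) B) /\
  (forall r : R, rNp N p < r -> exists B : R, in_range N p B /\ ~ ineq_holds N p r B).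
Proof.
  split.
  - intros B hB.
    destruct (in_range_inv N p B hN ltac:(lra) hB) as (u & [[hu0 | <-] hu1] & ->).
    + apply ineq_holds_iff_log_form; [exact hN | lra | exact hu0 |].
      apply ineq_log_form_rNp; [exact hN | lra | exact hu0].
    + rewrite Rmult_0_r, Rplus_0_r, Rpower_1_l. apply ineq_holds_at_1.
  - intros r hr.
    destruct (ineq_log_form_fails N p r hN hp hr) as (u & hu & hfail).
    exists (Rpower (1 + (INR N - 1) * u) (1 - p)). split.
    + apply in_range_Rpower; [lia | lra | lra].
    + rewrite ineq_holds_iff_log_form by (exact hN || lra). exact hfail.
Qed.
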